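(* For every sequence $S\in[n]^m$ and every finite set $X\subset\mathbb Q\setminus[n]$ of auxiliary elements, $\mathrm{OPT}(S)=\mathrm{OPT}_X(S)$.
   Context: Dynamic BST model on a finite key set $K\subset\mathbb Q$: an algorithm chooses an initial BST on $K$. To serve access $s_t$ it touches a set of nodes forming a connected subtree containing the root and $s_t$, may rearrange the touched nodes into any BST shape (untouched subtrees reattached validly), and pays the number of touched nodes. $\mathrm{OPT}(S)$ is the minimum total cost of serving $S$ over all offline algorithms with key set $K=[n]$. $\mathrm{OPT}_X(S)$ is the same minimum with key set $K=[n]\cup X$; the accesses are still the keys of $S$, all of which lie in $[n]$. *)

From mathcomp Require Import all_boot all_order all_algebra.
Set Implicit Arguments. Unset Strict Implicit. Unset Printing Implicit Defensive.
Import Order.TTheory GRing.Theory Num.Theory.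
Local Open Scope ring_scope.

Inductive tree : Type :=
| Leaf : tree
| Node : tree -> rat -> tree -> tree.

Fixpoint inorder (t : tree) : seq rat :=
  match t with
  | Leaf => [::]
  | Node l k r => inorder l ++ k :: inorder r
  end.

Definition bst (K : seq rat) (t : tree) : Prop :=
  sorted <%R (inorder t) /\ inorder t =i K.

(* P is the node set of a connected subtree of t containing the root
   (or empty): P is a subset of the keys of t closed under taking parents. *)
Fixpoint topset (P : seq rat) (t : tree) : Prop :=
  match t with
  | Leaf => True
  | Node l k r =>
      if k \in P then topset P l /\ topset P r
      else forall x, x \in inorder t -> x \notin P
  end.

(* The untouched subtrees hanging off the touched part P, in in-order. *)
Fixpoint hang (P : seq rat) (t : tree) : seq tree :=
  match t with
  | Leaf => [::]
  | Node l k r => if k \in P then hang P l ++ hang P r else [:: t]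
  end.

(* One access step: serving access s in tree T by touching the node set P
   (a connected subtree containing root and s), rearranging the touched nodes
   into any BST shape with the untouched subtrees reattached, giving T'. *)
Definition step (K : seq rat) (T T' : tree) (s : rat) (P : seq rat) : Prop :=
  [/\ uniq P, {subset P <= inorder T}, topset P T & s \in P] /\
  [/\ bst K T', topset P T' & hang P T = hang P T'].

Inductive exec (K : seq rat) : tree -> seq rat -> nat -> Prop :=
| exec_nil T : exec K T [::] 0
| exec_cons T T' s S P c :
    step K T T' s P -> exec K T' S c -> exec K T (s :: S) (size P + c).

Definition achievable (K : seq rat) (S : seq rat) (c : nat) : Prop :=
  exists T, bst K T /\ exec K T S c.

Definition is_OPT (K : seq rat) (S : seq rat) (v : nat) : Prop :=
  achievable K S v /\ forall c, achievable K S c -> (v <= c)%N.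

Definition natset (n : nat) : seq rat := [seq (i%:R : rat) | i <- iota 1 n].

From Stdlib Require Import Classical_Prop Wf_nat.
From mathcomp Require Import all_boot all_order all_algebra.
Set Implicit Arguments. Unset Strict Implicit. Unset Printing Implicit Defensive.
Import Order.TTheory GRing.Theory Num.Theory.
Local Open Scope ring_scope.

(* Executions are transported between key sets one auxiliary key x at a time.
   Inserting x as a leaf into every tree of an execution keeps every step
   legal at the same cost: x is never touched, and it lands in the untouched
   subtree holding its predecessor or successor, or else hangs alone between
   the touched nodes around it.  Conversely, when x is never accessed,
   deleting x from every tree (replacing it by its predecessor) turns each
   step into a legal one whose touched set is the old one with x replaced by
   its predecessor, so the cost does not increase. *)

Local Notation increasing s := (sorted <%R s).

Lemma sorted_node l k r :
  increasing (inorder (Node l k r)) <->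
  [/\ increasing (inorder l), increasing (inorder r),
      all (fun z => z < k) (inorder l) & all (fun z => k < z) (inorder r)].
Proof.
rewrite /= !sorted_pairwise; try exact: lt_trans.
rewrite pairwise_cat pairwise_cons allrel_consr.
split; first by case/and3P=> /andP[a _] b /andP[c d].
case=> a b c d; rewrite a b c d /= andbT.
apply/allrelP=> u w uin win; apply: lt_trans (allP c _ uin) (allP d _ win).
Qed.

Lemma mem_node z l k r :
  (z \in inorder (Node l k r)) = [|| z \in inorder l, z == k | z \in inorder r].
Proof. by rewrite /= mem_cat in_cons. Qed.

Definition is_node t := if t is Node _ _ _ then true else false.

(* [topset] and [hang] with the touched set given by a predicate, so that it
   can be transformed along with the tree. *)
Fixpoint top_closed (p : pred rat) t : Prop :=
  match t with
  | Leaf => True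
  | Node l k r =>
      if p k then top_closed p l /\ top_closed p r
      else forall x, x \in inorder t -> ~~ p x
  end.

Fixpoint hanging (p : pred rat) t : seq tree :=
  match t with
  | Leaf => [::]
  | Node l k r => if p k then hanging p l ++ hanging p r else [:: t]
  end.

Lemma eq_in_top_closed p q t :
  {in inorder t, p =1 q} -> top_closed p t -> top_closed q t.
Proof.
elim: t => //= l IHl k r IHr E.
have Ek : p k = q k by apply: E; rewrite mem_cat in_cons eqxx orbT.
rewrite -Ek; case: (p k); last by move=> H z zin; rewrite -E //; apply: H.
case=> Hl Hr; split; [apply: IHl Hl | apply: IHr Hr] => z zin; apply: E;
by rewrite mem_cat ?zin // in_cons zin !orbT.
Qed.

Lemma eq_in_hanging p q t : {in inorder t, p =1 q} -> hanging p t = hanging q t.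
Proof.
elim: t => //= l IHl k r IHr E.
have Ek : p k = q k by apply: E; rewrite mem_cat in_cons eqxx orbT.
rewrite -Ek; case: (p k) => //.
rewrite IHl ?IHr // => z zin; apply: E;
by rewrite mem_cat ?zin // in_cons zin !orbT.
Qed.

Lemma topsetP P q t : (forall z, (z \in P) = q z) -> topset P t <-> top_closed q t.
Proof.
move=> E; elim: t => //= l IHl k r IHr; rewrite E; case: (q k).
  by split; case=> a b; split; try (by apply/IHl); apply/IHr.
by split=> H z /H; rewrite E.
Qed.

Lemma hangE P q t : (forall z, (z \in P) = q z) -> hang P t = hanging q t.
Proof. by move=> E; elim: t => //= l -> k r ->; rewrite E. Qed.

Lemma untouched_tree p t : {in inorder t, forall z, ~~ p z} ->
  top_closed p t /\ hanging p t = if is_node t then [:: t] else [::].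
Proof.
case: t => //= l k r H.
by have -> : p k = false by apply/negbTE/H; rewrite mem_cat in_cons eqxx orbT.
Qed.

Definition untouched_subtree p t h :=
  is_node h && all (fun z => (z \in inorder t) && ~~ p z) (inorder h).

Lemma hanging_untouched p t :
  top_closed p t -> all (untouched_subtree p t) (hanging p t).
Proof.
elim: t => //= l IHl k r IHr; case pk: (p k).
  case=> /IHl Hl /IHr Hr; rewrite all_cat; apply/andP; split.
    apply: sub_all Hl => h /andP[nh /allP H]; rewrite /untouched_subtree nh.
    by apply/allP => z /H /andP[zin ->]; rewrite mem_cat zin.
  apply: sub_all Hr => h /andP[nh /allP H]; rewrite /untouched_subtree nh.
  by apply/allP => z /H /andP[zin ->]; rewrite mem_cat in_cons zin !orbT.
by move=> H; rewrite /= andbT /untouched_subtree /=; apply/allP => z zin; rewrite zin H.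
Qed.

Lemma hanging_nodes p t : top_closed p t -> all is_node (hanging p t).
Proof. by move=> /hanging_untouched; apply: sub_all => h /andP[]. Qed.

Lemma all_hanging p t (Q : pred tree) : top_closed p t ->
  (forall h, is_node h -> {subset inorder h <= inorder t} -> Q h) ->
  all Q (hanging p t).
Proof.
move=> tt H; apply: sub_all (hanging_untouched tt) => h /andP[nh /allP Hh].
by apply: H => // z /Hh /andP[].
Qed.

Lemma eq_in_map_hanging (f g : tree -> tree) p t : top_closed p t ->
  (forall h, untouched_subtree p t h -> f h = g h) ->
  map f (hanging p t) = map g (hanging p t).
Proof.
move=> /hanging_untouched + E; elim: (hanging p t) => //= h hs IH /andP[uh uhs].
by rewrite E // IH.
Qed.

Lemma filter_hanging_nodes p t : top_closed p t -> filter is_node (hanging p t) = hanging p t.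
Proof. by move=> /hanging_nodes /all_filterP. Qed.

Lemma mem_node_lt z l k r : increasing (inorder (Node l k r)) -> z < k ->
  (z \in inorder (Node l k r)) = (z \in inorder l).
Proof.
case/sorted_node=> _ _ _ ar zk; rewrite mem_node (lt_eqF zk) /= orbC.
by case: (boolP (z \in inorder r)) => // /(allP ar); rewrite ltNge (ltW zk).
Qed.

Lemma mem_node_gt z l k r : increasing (inorder (Node l k r)) -> k < z ->
  (z \in inorder (Node l k r)) = (z \in inorder r).
Proof.
case/sorted_node=> _ _ al _ kz; rewrite mem_node (gt_eqF kz) /=.
by case: (boolP (z \in inorder l)) => // /(allP al); rewrite ltNge (ltW kz).
Qed.

Fixpoint max_key t := match t with
  | Leaf => 0 | Node _ k r => if r is Leaf then k else max_key r end.
Fixpoint del_max t := match t with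
  | Leaf => Leaf | Node l k r => if r is Leaf then l else Node l k (del_max r) end.

Lemma inorder_del_max t :
  is_node t -> inorder t = rcons (inorder (del_max t)) (max_key t).
Proof.
elim: t => // l _ k r IHr _; case: r IHr => [|a b c] IH; first by rewrite /= cats1.
move: (IH isT); set t' := Node a b c => E.
change (inorder l ++ k :: inorder t' =
        rcons (inorder l ++ k :: inorder (del_max t')) (max_key t')).
by rewrite E rcons_cat rcons_cons.
Qed.

Lemma max_key_in t : is_node t -> max_key t \in inorder t.
Proof. by move=> nt; rewrite (inorder_del_max nt) mem_rcons mem_head. Qed.

Lemma del_max_lt t : is_node t -> increasing (inorder t) ->
  forall z, z \in inorder (del_max t) -> z < max_key t.
Proof.
move=> nt; rewrite (inorder_del_max nt) -cats1 sorted_pairwise; last exact: lt_trans.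
by rewrite pairwise_cat => /and3P[/allrelP H _ _] z zin; apply: H; rewrite ?mem_head.
Qed.

Lemma mem_del_max t : is_node t -> {subset inorder (del_max t) <= inorder t}.
Proof. by move=> nt z zin; rewrite (inorder_del_max nt) mem_rcons in_cons zin orbT. Qed.

Definition join l r := if l is Leaf then r else Node (del_max l) (max_key l) r.

Fixpoint del x t := match t with
  | Leaf => Leaf
  | Node l k r => if x == k then join l r
                  else if x < k then Node (del x l) k r else Node l k (del x r)
  end.

Lemma inorder_join l r : inorder (join l r) = inorder l ++ inorder r.
Proof.
case: l => // a b c; rewrite /join [inorder (Node a b c)]inorder_del_max //=.
by rewrite cat_rcons.
Qed.

Lemma inorder_del x t :
  increasing (inorder t) -> inorder (del x t) = filter (predC1 x) (inorder t).
Proof.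
elim: t => //= l IHl k r IHr /sorted_node [sl sr al ar].
rewrite filter_cat /=.
have xl : x == k -> all (predC1 x) (inorder l).
  by move=> /eqP ->; apply: sub_all al => z /=; move/lt_eqF => ->.
have xr : x == k -> all (predC1 x) (inorder r).
  by move=> /eqP ->; apply: sub_all ar => z /=; rewrite eq_sym; move/lt_eqF => ->.
case: ifP => xk.
  by rewrite inorder_join (eqP xk) eqxx /= -(eqP xk) !(all_filterP _) // ?xl ?xr.
rewrite /= eq_sym xk /=; case: ifP => xlt /=.
  rewrite IHl //; congr (_ ++ _ :: _); apply/esym/all_filterP.
  by apply: sub_all ar => z /= kz; apply/eqP => zx; move: kz; rewrite zx ltNge (ltW xlt).
rewrite IHr //; congr (_ ++ _ :: _); apply/esym/all_filterP.
have kx : k < x by rewrite lt_neqAle eq_sym xk /= leNgt xlt.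
by apply: sub_all al => z /= kz; apply/eqP => zx; move: kz; rewrite zx ltNge (ltW kx).
Qed.

Lemma bst_del K x t : x \notin K -> bst (x :: K) t -> bst K (del x t).
Proof.
move=> xK [st et]; split; rewrite inorder_del //; first exact: (sorted_filter lt_trans).
move=> z; rewrite mem_filter et in_cons /=.
by case: (eqVneq z x) => [->|//]; rewrite (negbTE xK).
Qed.

Lemma hanging_del_max_touched p l : is_node l -> top_closed p l -> p (max_key l) ->
  top_closed p (del_max l) /\ hanging p (del_max l) = hanging p l.
Proof.
elim: l => // a _ k b IHb _ tl pm.
have tm := max_key_in (t:=Node a k b) isT.
move: tl => /=; case pk: (p k); last by move=> H; move: (H _ tm); rewrite pm.
case=> ta tb; case: b IHb tb pm tm => [|c d e] IH tb pm tm.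
  by split => //; rewrite /= cats0.
have [t1 h1] := IH isT tb pm.
by move: t1 h1; set X := del_max _ => t1 h1; rewrite /= pk h1.
Qed.

Definition del_max_if m t := if m \in inorder t then del_max t else t.

Lemma hanging_del_max_untouched p l : is_node l -> increasing (inorder l) ->
  top_closed p l -> ~~ p (max_key l) ->
  top_closed p (del_max l) /\
  hanging p (del_max l) = filter is_node (map (del_max_if (max_key l)) (hanging p l)).
Proof.
elim: l => // a _ k b IHb _ sl tl pm.
have tm := max_key_in (t:=Node a k b) isT.
have [sa sb aa ab] := (sorted_node _ _ _).1 sl.
move: tl; rewrite [top_closed p (Node a k b)]/=; case pk: (p k); last first.
  move=> H.
  have [t1 h1] := untouched_tree (p:=p) (t:=del_max (Node a k b))
    (fun z zin => H z (@mem_del_max (Node a k b) isT z zin)).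
  split => //; rewrite h1 [hanging p (Node a k b)]/= pk /= /del_max_if tm.
  by case: (is_node _).
case=> ta tb; case: b IHb sb ab tb pm tm sl => [|c d e] IH sb ab tb pm tm sl.
  by move: pm; rewrite /= pk.
have [t1 h1] := IH isT sb tb pm.
move: t1 h1 (max_key_in (t:=Node c d e) isT); set X := del_max _; set m := max_key _.
move=> t1 h1 mN; have -> : max_key (Node a k (Node c d e)) = m by [].
rewrite /= pk h1; split => //.
rewrite map_cat filter_cat; congr (_ ++ _).
have km : k < m by apply: (allP ab).
rewrite (@eq_in_map_hanging _ id _ _ ta) ?map_id ?filter_hanging_nodes //.
move=> h /andP[_ /allP H]; rewrite /del_max_if; case: ifP => // mh.
have /andP[ma _] := H _ mh.
by move: (allP aa _ ma); rewrite ltNge (ltW km).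
Qed.

Section Deletion.
Variables (p : pred rat) (x m : rat).

(* When x is deleted, its predecessor m takes its place, so m is touched
   exactly when x was. *)
Definition del_touched z := if p x then (z != x) && (p z || (z == m)) else p z.

Definition del_hanging t :=
  if x \in inorder t then del x t else if p x then del_max_if m t else t.

Definition del_spec T :=
  top_closed del_touched (del x T) /\
  hanging del_touched (del x T) = filter is_node (map del_hanging (hanging p T)).

Definition pred_cand s :=
  all (fun z => (z < x) ==> (z <= m)) s &&
  (if m == x then ~~ has (fun z => z < x) s
   else (m < x) && ((m \in s) || ~~ has (fun z => z < x) s)).

Lemma pred_cand_le s : pred_cand s -> m <= x.
Proof. by case/andP=> _; case: eqP => [-> _|_ /andP[/ltW]]. Qed.

Lemma del_touched_gt z : m <= x -> x < z -> del_touched z = p z.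
Proof.
move=> mx xz; rewrite /del_touched; case: (p x) => //.
by rewrite (gt_eqF xz) (gt_eqF (le_lt_trans mx xz)) orbF.
Qed.

Lemma del_hanging_id t : top_closed p t -> x \notin inorder t ->
  (p x -> m \in inorder t -> p m) ->
  filter is_node (map del_hanging (hanging p t)) = hanging p t.
Proof.
move=> tt xn Hm; rewrite (@eq_in_map_hanging _ id _ _ tt) ?map_id ?filter_hanging_nodes //.
move=> h /andP[_ /allP H]; rewrite /del_hanging; case: ifP => xh.
  by have /andP[xt _] := H _ xh; rewrite xt in xn.
rewrite /del_max_if; case: ifP => // px; case: ifP => // mh.
by have /andP[mt npm] := H _ mh; rewrite (Hm px mt) in npm.
Qed.

Lemma del_spec_untouched T : increasing (inorder T) -> x \in inorder T ->
  {in inorder T, forall z, ~~ p z} -> del_spec T.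
Proof.
move=> sT xin H; have px : ~~ p x := H x xin.
have [t1 h1] : top_closed del_touched (del x T) /\
    hanging del_touched (del x T) = if is_node (del x T) then [:: del x T] else [::].
  apply: untouched_tree => z; rewrite inorder_del // mem_filter => /andP[_ /H].
  by rewrite /del_touched (negbTE px).
have [_ hT] := untouched_tree H.
split => //; rewrite h1 hT; case: T {sT H h1 t1 hT} xin => //= l k r xin.
by rewrite /del_hanging xin /=; case: is_node.
Qed.

Lemma del_spec_left l k r : increasing (inorder (Node l k r)) -> p k -> x < k ->
  top_closed p r -> pred_cand (inorder (Node l k r)) -> del_spec l ->
  del_spec (Node l k r).
Proof.
move=> sT pk xk tr /pred_cand_le mx [t1 h1].
have [_ _ _ ar] := (sorted_node _ _ _).1 sT.
have qr : {in inorder r, p =1 del_touched}.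
  by move=> z zr; rewrite del_touched_gt //; apply: lt_trans xk (allP ar _ zr).
have qk : del_touched k by rewrite del_touched_gt.
rewrite /del_spec /= (lt_eqF xk) xk /= qk pk.
split; first by split => //; apply: eq_in_top_closed qr tr.
rewrite h1 -(eq_in_hanging qr) map_cat filter_cat (del_hanging_id tr) //.
  by apply/negP => /(allP ar); rewrite ltNge (ltW xk).
by move=> _ /(allP ar) km; move: (le_lt_trans mx xk); rewrite ltNge (ltW km).
Qed.

Lemma del_spec_right l k r : increasing (inorder (Node l k r)) -> p k -> k < x ->
  top_closed p l -> pred_cand (inorder (Node l k r)) -> del_spec r ->
  del_spec (Node l k r).
Proof.
move=> sT pk kx tl /andP[Ha _] [t1 h1].
have [_ _ al _] := (sorted_node _ _ _).1 sT.
have km : k <= m by have := allP Ha k; rewrite mem_node eqxx orbT kx => /(_ isT).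
have mnl : m \notin inorder l by apply/negP => /(allP al); rewrite ltNge km.
have qk : del_touched k by rewrite /del_touched pk (lt_eqF kx) /=; case: (p x).
have ql : {in inorder l, p =1 del_touched}.
  move=> z zl; rewrite /del_touched; case: (p x) => //.
  have zk := allP al _ zl.
  by rewrite (lt_eqF (lt_trans zk kx)) (lt_eqF (lt_le_trans zk km)) orbF.
have xk : (x < k) = false by rewrite ltNge (ltW kx).
rewrite /del_spec /= (gt_eqF kx) xk /= qk pk.
split; first by split => //; apply: eq_in_top_closed ql tl.
rewrite h1 -(eq_in_hanging ql) map_cat filter_cat (del_hanging_id tl) //.
  by apply/negP => /(allP al); rewrite ltNge (ltW kx).
by move=> _ ml; rewrite ml in mnl.
Qed.

Lemma pred_cand_left l k r : increasing (inorder (Node l k r)) -> x < k ->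
  pred_cand (inorder (Node l k r)) -> pred_cand (inorder l).
Proof.
move=> sT xk Hc; have mx := pred_cand_le Hc; move: Hc => /andP[Ha Hm].
have hasE : has (fun z => z < x) (inorder (Node l k r)) = has (fun z => z < x) (inorder l).
  by apply/hasP/hasP => -[z zin zx]; exists z => //;
    move: zin; rewrite (mem_node_lt sT (lt_trans zx xk)).
apply/andP; split; first by move: Ha; rewrite /= all_cat => /andP[].
by rewrite -hasE -(mem_node_lt sT (le_lt_trans mx xk)).
Qed.

Lemma pred_cand_right l k r : increasing (inorder (Node l k r)) -> k < x ->
  pred_cand (inorder (Node l k r)) -> pred_cand (inorder r).
Proof.
move=> sT kx /andP[Ha Hm].
have [_ _ al ar] := (sorted_node _ _ _).1 sT.
have kT : k \in inorder (Node l k r) by rewrite mem_node eqxx orbT.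
have km : k <= m by have := allP Ha k kT; rewrite kx.
have below : has (fun z => z < x) (inorder (Node l k r)) by apply/hasP; exists k.
move: Hm; rewrite below /= orbF; case: eqP => [_ //|_ /andP[mx mT]].
have Har : all (fun z => (z < x) ==> (z <= m)) (inorder r).
  by move: Ha; rewrite /= all_cat /= => /and3P[].
rewrite /pred_cand Har (lt_eqF mx) mx /=.
move: mT; rewrite mem_node; case/or3P => [ml | /eqP mk | -> //].
  by move: (allP al _ ml); rewrite ltNge km.
apply/orP; right; apply/hasPn => z zr; apply/negP => zx.
by move: (allP Har _ zr); rewrite zx /= mk leNgt (allP ar _ zr).
Qed.

Lemma pred_cand_root l r : is_node l -> increasing (inorder (Node l x r)) ->
  pred_cand (inorder (Node l x r)) -> max_key l = m.
Proof.
move=> nl sT /andP[Ha Hm].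
have [sl _ al ar] := (sorted_node _ _ _).1 sT.
have tl := max_key_in nl; have tlx : max_key l < x by apply: (allP al).
have tlT : max_key l \in inorder (Node l x r) by rewrite mem_node tl.
have below : has (fun z => z < x) (inorder (Node l x r)) by apply/hasP; exists (max_key l).
move: Hm; rewrite below /= orbF; case: eqP => [_ //|_ /andP[mx mT]].
have ml : m \in inorder l.
  move: mT; rewrite mem_cat in_cons (lt_eqF mx) /= => /orP[// | mr].
  by move: (allP ar _ mr); rewrite ltNge (ltW mx).
apply/le_anti/andP; split; first by have := allP Ha _ tlT; rewrite tlx.
move: ml; rewrite (inorder_del_max nl) mem_rcons in_cons => /orP[/eqP -> //|md].
exact/ltW/(del_max_lt nl sl).
Qed.

Lemma del_spec_root l r : increasing (inorder (Node l x r)) -> p x ->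
  top_closed p l -> top_closed p r -> pred_cand (inorder (Node l x r)) ->
  del_spec (Node l x r).
Proof.
move=> sT px tl tr Hc; have mx := pred_cand_le Hc.
have [sl _ al ar] := (sorted_node _ _ _).1 sT.
have qr : {in inorder r, p =1 del_touched}.
  by move=> z zr; rewrite del_touched_gt //; apply: (allP ar).
have mnr : m \notin inorder r by apply/negP => /(allP ar); rewrite ltNge mx.
have xnr : x \notin inorder r by apply/negP => /(allP ar); rewrite ltxx.
have xnl : x \notin inorder l by apply/negP => /(allP al); rewrite ltxx.
rewrite /del_spec /= eqxx px.
case: l sT sl al tl xnl Hc => [|a b c] sT sl al tl xnl Hc.
  rewrite /= -(eq_in_hanging qr); split; first exact: eq_in_top_closed qr tr.
  by rewrite (del_hanging_id tr) // => _ mr; rewrite mr in mnr.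
set l := Node a b c in sT sl al tl xnl Hc *.
have nl : is_node l by [].
have mE := pred_cand_root nl sT Hc.
have -> : join l r = Node (del_max l) m r by rewrite -mE.
clearbody l.
have mlx : m < x by rewrite -mE; apply: (allP al); apply: max_key_in.
have qm : del_touched m by rewrite /del_touched px (lt_eqF mlx) eqxx orbT.
have qd : {in inorder (del_max l), p =1 del_touched}.
  move=> z zd; have zm : z < m by rewrite -mE; apply: del_max_lt.
  by rewrite /del_touched px (lt_eqF (lt_trans zm mlx)) (lt_eqF zm) orbF.
rewrite [top_closed _ _]/= [hanging _ (Node _ m r)]/= qm.
rewrite -(eq_in_hanging qd) -(eq_in_hanging qr) map_cat filter_cat (del_hanging_id tr) //;
  last by move=> _ mr; rewrite mr in mnr.
case pm: (p m).
  have pml : p (max_key l) by rewrite mE.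
  have [t1 h1] := hanging_del_max_touched nl tl pml.
  split; first by split; [apply: eq_in_top_closed qd t1 | apply: eq_in_top_closed qr tr].
  by rewrite h1 (del_hanging_id tl).
have pml : ~~ p (max_key l) by rewrite mE pm.
have [t1 h1] := hanging_del_max_untouched nl sl tl pml.
split; first by split; [apply: eq_in_top_closed qd t1 | apply: eq_in_top_closed qr tr].
rewrite h1 mE; congr (filter _ _ ++ _).
apply: (eq_in_map_hanging tl) => h /andP[_ /allP H].
have xh : (x \in inorder h) = false by apply/negP => /H /andP[xl _]; rewrite xl in xnl.
by rewrite /del_hanging xh px.
Qed.

Lemma hanging_del T : increasing (inorder T) -> x \in inorder T -> top_closed p T ->
  pred_cand (inorder T) -> del_spec T.
Proof.
elim: T => // l IHl k r IHr sT xin tT Hc.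
have [sl sr _ _] := (sorted_node _ _ _).1 sT.
move: tT => /=; case pk: (p k); last by move=> H; apply: del_spec_untouched.
case=> tl tr.
case: (ltgtP x k) => [xk | kx | xk].
- apply: del_spec_left (IHl sl _ tl (pred_cand_left sT xk Hc)) => //.
  by rewrite -(mem_node_lt sT xk).
- apply: del_spec_right (IHr sr _ tr (pred_cand_right sT kx Hc)) => //.
  by rewrite -(mem_node_gt sT kx).
- by move: sT pk Hc; rewrite -xk => *; apply: del_spec_root.
Qed.

End Deletion.

Fixpoint ins x t := match t with
  | Leaf => Node Leaf x Leaf
  | Node l k r => if x < k then Node (ins x l) k r else Node l k (ins x r)
  end.

Lemma mem_ins x t z : (z \in inorder (ins x t)) = (z == x) || (z \in inorder t).
Proof.
elim: t => [|l IHl k r IHr] /=; first by rewrite in_cons orbF.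
case: ifP => _; rewrite /= !mem_cat !in_cons ?IHl ?IHr;
by case: (z == x); case: (z \in inorder l); case: (z == k); rewrite ?orbT.
Qed.

Lemma is_node_ins x t : is_node (ins x t).
Proof. by case: t => //= l k r; case: ifP. Qed.

Lemma sorted_ins x t :
  increasing (inorder t) -> x \notin inorder t -> increasing (inorder (ins x t)).
Proof.
elim: t => [|l IHl k r IHr] //= /sorted_node [sl sr al ar].
rewrite mem_cat in_cons negb_or negb_or => /and3P[xl xk xr].
case: ifP => xltk; apply/sorted_node; split => //.
- by apply: IHl.
- by apply/allP => z; rewrite mem_ins => /orP[/eqP -> //|]; exact: (allP al).
- by apply: IHr.
- apply/allP => z; rewrite mem_ins => /orP[/eqP -> |]; last exact: (allP ar).
  by rewrite lt_neqAle eq_sym xk /= leNgt xltk.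
Qed.

Lemma bst_ins K x t : x \notin K -> bst K t -> bst (x :: K) (ins x t).
Proof.
move=> xK [st et]; split; first by apply: sorted_ins; rewrite ?et.
by move=> z; rewrite mem_ins et in_cons.
Qed.

Section Insertion.
Variables (p : pred rat) (x a b : rat).

Definition has_below t := has (fun z => z < x) (inorder t).
Definition has_nbr t := (a \in inorder t) || (b \in inorder t).
Definition ins_if_nbr t := if has_nbr t then ins x t else t.

(* With a and b the neighbours of x among the keys, x joins the untouched
   subtree containing one of them; if there is none, x hangs alone between
   the subtrees below and above it. *)
Definition ins_hanging hs :=
  if has has_nbr hs then map ins_if_nbr hs
  else filter has_below hs ++ Node Leaf x Leaf :: filter (predC has_below) hs.

Definition ins_spec T :=
  top_closed p (ins x T) /\ hanging p (ins x T) = ins_hanging (hanging p T).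

Definition nbr_cand s :=
  [&& all (fun z => (z < x) ==> (z <= a)) s, a <= x,
      (a \in s) || ~~ has (fun z => z < x) s,
      all (fun z => (x < z) ==> (b <= z)) s, x <= b &
      (b \in s) || ~~ has (fun z => x < z) s].

Lemma ins_hanging_catr hs1 hs2 :
  all (fun t => ~~ has_nbr t && ~~ has_below t) hs2 ->
  ins_hanging (hs1 ++ hs2) = ins_hanging hs1 ++ hs2.
Proof.
move=> H; have [Hn Hb] : all (predC has_nbr) hs2 /\ all (predC has_below) hs2.
  by split; apply: sub_all H => t /andP[].
have hn : has has_nbr hs2 = false by apply/negbTE; rewrite -all_predC.
rewrite /ins_hanging has_cat hn orbF; case: ifP => _.
  rewrite map_cat; congr (_ ++ _); elim: hs2 Hn {H Hb hn} => //= t hs IH /andP[ht Hs].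
  by rewrite IH // /ins_if_nbr (negbTE ht).
rewrite !filter_cat (all_filterP Hb).
have -> : filter has_below hs2 = [::].
  by apply/nilP; rewrite /nilp size_filter -leqn0 leqNgt -has_count -all_predC.
by rewrite cats0 -catA.
Qed.

Lemma ins_hanging_catl hs1 hs2 :
  all (fun t => ~~ has_nbr t && has_below t) hs1 ->
  ins_hanging (hs1 ++ hs2) = hs1 ++ ins_hanging hs2.
Proof.
move=> H; have [Hn Hb] : all (predC has_nbr) hs1 /\ all has_below hs1.
  by split; apply: sub_all H => t /andP[].
have hn : has has_nbr hs1 = false by apply/negbTE; rewrite -all_predC.
rewrite /ins_hanging has_cat hn /=; case: ifP => _.
  rewrite map_cat; congr (_ ++ _); elim: hs1 Hn {H Hb hn} => //= t hs IH /andP[ht Hs].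
  by rewrite IH // /ins_if_nbr (negbTE ht).
rewrite !filter_cat (all_filterP Hb).
have -> : filter (predC has_below) hs1 = [::].
  by apply/nilP; rewrite /nilp size_filter -leqn0 leqNgt -has_count has_predC Hb.
by rewrite -catA.
Qed.

Lemma nbr_cand_left l k r : increasing (inorder (Node l k r)) -> x < k ->
  nbr_cand (inorder (Node l k r)) -> nbr_cand (inorder l).
Proof.
move=> sT xk /and5P[Ha ax Ha' Hb /andP[xb Hb']].
have [_ _ al ar] := (sorted_node _ _ _).1 sT.
have kT : k \in inorder (Node l k r) by rewrite mem_node eqxx orbT.
have bk : b <= k by have := allP Hb k kT; rewrite xk.
have bT : b \in inorder (Node l k r) by case/orP: Hb' => // /hasPn/(_ k kT); rewrite xk.
move: Ha Hb => /=; rewrite !all_cat => /andP[Hal _] /andP[Hbl _].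
rewrite /nbr_cand Hal ax Hbl xb /=; apply/andP; split.
  move: Ha'; rewrite (mem_node_lt sT (le_lt_trans ax xk)) /= has_cat negb_or.
  by case/orP => [-> //|/andP[-> _]]; rewrite orbT.
move: bT; rewrite mem_node; case/or3P => [-> // | /eqP bk' | br]; last first.
  by move: (allP ar _ br); rewrite ltNge bk.
apply/orP; right; apply/hasPn => z zl; apply/negP => xz.
by move: (allP Hbl _ zl); rewrite xz /= bk' leNgt (allP al _ zl).
Qed.

Lemma nbr_cand_right l k r : increasing (inorder (Node l k r)) -> k < x ->
  nbr_cand (inorder (Node l k r)) -> nbr_cand (inorder r).
Proof.
move=> sT kx /and5P[Ha ax Ha' Hb /andP[xb Hb']].
have [_ _ al ar] := (sorted_node _ _ _).1 sT.
have kT : k \in inorder (Node l k r) by rewrite mem_node eqxx orbT.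
have ak : k <= a by have := allP Ha k kT; rewrite kx.
have aT : a \in inorder (Node l k r) by case/orP: Ha' => // /hasPn/(_ k kT); rewrite kx.
move: Ha Hb => /=; rewrite !all_cat /= => /and3P[_ _ Har] /and3P[_ _ Hbr].
rewrite /nbr_cand Har ax Hbr xb /=; apply/andP; split; last first.
  move: Hb'; rewrite (mem_node_gt sT (lt_le_trans kx xb)) /= has_cat /= negb_or negb_or.
  by case/orP => [-> //|/and3P[_ _ ->]]; rewrite orbT.
move: aT; rewrite mem_node; case/or3P => [al' | /eqP ak' | -> //].
  by move: (allP al _ al'); rewrite ltNge ak.
apply/orP; right; apply/hasPn => z zr; apply/negP => zx.
by move: (allP Har _ zr); rewrite zx /= ak' leNgt (allP ar _ zr).
Qed.

Lemma ins_spec_untouched T : is_node T -> x \notin inorder T -> ~~ p x ->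
  {in inorder T, forall z, ~~ p z} -> nbr_cand (inorder T) -> ins_spec T.
Proof.
case: T => // l k r _ xnT px H /and5P[_ _ Ha' _ /andP[_ Hb']].
have [t1 h1] : top_closed p (ins x (Node l k r)) /\
    hanging p (ins x (Node l k r)) = [:: ins x (Node l k r)].
  have := @untouched_tree p (ins x (Node l k r)); rewrite is_node_ins; apply.
  by move=> z; rewrite mem_ins => /orP[/eqP -> //|/H].
have [_ hT] := untouched_tree H.
have kT : k \in inorder (Node l k r) by rewrite mem_node eqxx orbT.
have nbrT : has_nbr (Node l k r).
  rewrite /has_nbr; case: (ltgtP k x) => [kx|xk|kx].
  - by case/orP: Ha' => [-> //|/hasPn/(_ k kT)]; rewrite kx.
  - by case/orP: Hb' => [->|/hasPn/(_ k kT)]; rewrite ?orbT // xk.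
  - by move: xnT; rewrite -kx kT.
by split => //; rewrite h1 hT /ins_hanging /= /ins_if_nbr nbrT.
Qed.

Lemma ins_spec_left l k r : increasing (inorder (Node l k r)) -> p k -> x < k ->
  top_closed p r -> nbr_cand (inorder (Node l k r)) -> ins_spec l ->
  ins_spec (Node l k r).
Proof.
move=> sT pk xk tr /and5P[_ ax _ Hb /andP[_ _]] [t1 h1].
have [_ _ _ ar] := (sorted_node _ _ _).1 sT.
have bk : b <= k by have := allP Hb k; rewrite mem_node eqxx orbT xk => /(_ isT).
rewrite /ins_spec /= xk /= pk; split => //.
rewrite h1 ins_hanging_catr //; apply: (all_hanging tr) => h _ hr.
have kr z : z \in inorder h -> k < z by move/hr; apply: (allP ar).
rewrite /has_nbr /has_below negb_or -andbA; apply/and3P; split; apply/negP.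
- by move/kr; rewrite ltNge (ltW (le_lt_trans ax xk)).
- by move/kr; rewrite ltNge bk.
- by case/hasP => z /kr kz; rewrite ltNge (ltW (lt_trans xk kz)).
Qed.

Lemma ins_spec_right l k r : increasing (inorder (Node l k r)) -> p k -> k < x ->
  top_closed p l -> nbr_cand (inorder (Node l k r)) -> ins_spec r ->
  ins_spec (Node l k r).
Proof.
move=> sT pk kx tl /and5P[Ha _ _ _ /andP[xb _]] [t1 h1].
have [_ _ al _] := (sorted_node _ _ _).1 sT.
have ak : k <= a by have := allP Ha k; rewrite mem_node eqxx orbT kx => /(_ isT).
have xk : (x < k) = false by rewrite ltNge (ltW kx).
rewrite /ins_spec /= xk /= pk; split => //.
rewrite h1 ins_hanging_catl //; apply: (all_hanging tl) => h nh hl.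
have kl z : z \in inorder h -> z < k by move/hl; apply: (allP al).
rewrite /has_nbr /has_below negb_or -andbA; apply/and3P; split.
- by apply/negP => /kl; rewrite ltNge ak.
- by apply/negP => /kl; rewrite ltNge (ltW (lt_le_trans kx xb)).
- case: h nh kl {hl} => // h1' d h2 _ kl; apply/hasP; exists d.
    by rewrite mem_node eqxx orbT.
  by apply: lt_trans (kl _ _) kx; rewrite mem_node eqxx orbT.
Qed.

Lemma hanging_ins T : increasing (inorder T) -> x \notin inorder T -> ~~ p x ->
  top_closed p T -> nbr_cand (inorder T) -> ins_spec T.
Proof.
elim: T => [|l IHl k r IHr] sT xnT px tT Hc.
  by rewrite /ins_spec /= (negbTE px); split => // z; rewrite inE => /eqP ->.
have [sl sr _ _] := (sorted_node _ _ _).1 sT.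
move: tT => /=; case pk: (p k); last by move=> H; apply: ins_spec_untouched.
case=> tl tr; case: (ltgtP x k) => [xk | kx | xk].
- apply: ins_spec_left (IHl sl _ px tl (nbr_cand_left sT xk Hc)) => //.
  by rewrite -(mem_node_lt sT xk).
- apply: ins_spec_right (IHr sr _ px tr (nbr_cand_right sT kx Hc)) => //.
  by rewrite -(mem_node_gt sT kx).
- by move: xnT; rewrite xk mem_node eqxx orbT.
Qed.

End Insertion.

Definition pred_key (x : rat) s := last x [seq z <- s | z < x].
Definition succ_key (x : rat) s := head x [seq z <- s | x < z].

Section Neighbours.
Variables (x : rat) (s : seq rat).
Hypothesis ss : increasing s.

Lemma pred_key_ge : all (fun z => (z < x) ==> (z <= pred_key x s)) s.
Proof.
apply/allP => z zs; apply/implyP => zx; rewrite /pred_key.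
have: z \in [seq z <- s | z < x] by rewrite mem_filter zx.
have := sorted_filter lt_trans (fun z => z < x) ss.
case/lastP: (filter _ _) => // f y; rewrite last_rcons -cats1 sorted_pairwise;
  last exact: lt_trans.
rewrite pairwise_cat mem_cat mem_seq1 orbC => /and3P[/allrelP H _ _].
by case/orP => [/eqP -> // | zf]; apply/ltW/H; rewrite ?mem_head.
Qed.

Lemma pred_key_filter : has (fun z => z < x) s -> pred_key x s \in [seq z <- s | z < x].
Proof.
by rewrite has_filter /pred_key; case/lastP: (filter _ _) => // f y _;
   rewrite last_rcons mem_rcons mem_head.
Qed.

Lemma pred_key_none : ~~ has (fun z => z < x) s -> pred_key x s = x.
Proof. by rewrite has_filter negbK /pred_key => /eqP ->. Qed.

Lemma pred_key_in : pred_key x s != x -> pred_key x s \in s.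
Proof.
case: (boolP (has (fun z => z < x) s)) => [/pred_key_filter|/pred_key_none ->].
  by rewrite mem_filter => /andP[_ ->].
by rewrite eqxx.
Qed.

Lemma succ_key_le : all (fun z => (x < z) ==> (succ_key x s <= z)) s.
Proof.
apply/allP => z zs; apply/implyP => xz; rewrite /succ_key.
have: z \in [seq z <- s | x < z] by rewrite mem_filter xz.
have := sorted_filter lt_trans (fun z => x < z) ss.
case: (filter _ _) => // y g; rewrite /= path_sortedE; last exact: lt_trans.
by case/andP => /allP H _; rewrite in_cons => /orP[/eqP -> // | /H /ltW].
Qed.

Lemma succ_key_filter : has (fun z => x < z) s -> succ_key x s \in [seq z <- s | x < z].
Proof. by rewrite has_filter /succ_key; case: (filter _ _) => // y g _; rewrite mem_head. Qed.

Lemma succ_key_none : ~~ has (fun z => x < z) s -> succ_key x s = x.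
Proof. by rewrite has_filter negbK /succ_key => /eqP ->. Qed.

Lemma pred_cand_pred_key : pred_cand x (pred_key x s) s.
Proof.
rewrite /pred_cand pred_key_ge /=.
case: (boolP (has (fun z => z < x) s)) => [h|nh]; last by rewrite (pred_key_none nh) eqxx.
have := pred_key_filter h; rewrite mem_filter => /andP[px ->].
by rewrite (lt_eqF px) px.
Qed.

Lemma nbr_cand_keys : nbr_cand x (pred_key x s) (succ_key x s) s.
Proof.
have Hp : (pred_key x s <= x) && ((pred_key x s \in s) || ~~ has (fun z => z < x) s).
  case: (boolP (has _ s)) => [/pred_key_filter|/pred_key_none ->]; last by rewrite lexx orbT.
  by rewrite mem_filter => /andP[/ltW -> ->].
have Hs : (x <= succ_key x s) && ((succ_key x s \in s) || ~~ has (fun z => x < z) s).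
  case: (boolP (has _ s)) => [/succ_key_filter|/succ_key_none ->]; last by rewrite lexx orbT.
  by rewrite mem_filter => /andP[/ltW -> ->].
case/andP: Hp => pk_le pk_in; case/andP: Hs => sk_ge sk_in.
by rewrite /nbr_cand pred_key_ge succ_key_le pk_le pk_in sk_ge sk_in.
Qed.

End Neighbours.

Lemma bst_inorder K T T' : bst K T -> bst K T' -> inorder T' = inorder T.
Proof.
by case=> sT eT [sT' eT']; apply: (irr_sorted_eq lt_trans ltxx sT' sT) => z; rewrite eT' eT.
Qed.

Lemma step_ins K x T T' s P : x \notin K -> bst K T -> step K T T' s P ->
  step (x :: K) (ins x T) (ins x T') s P.
Proof.
move=> xK bT [[uP sP tP sinP] [bT' tP' hP]].
have eqT := bst_inorder bT bT'; case: bT (bT') => sT eT [sT' _].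
have xnT : x \notin inorder T by rewrite eT.
have px : x \notin P by apply: contra xnT => /sP.
have topP : forall t, topset P t <-> top_closed (fun z => z \in P) t by move=> t; apply: topsetP.
have hangP : forall t, hang P t = hanging (fun z => z \in P) t by move=> t; apply: hangE.
have Hc := nbr_cand_keys x sT.
set a := pred_key _ _ in Hc; set b := succ_key _ _ in Hc.
have Hc' : nbr_cand x a b (inorder T') by rewrite eqT.
have xnT' : x \notin inorder T' by rewrite eqT.
have [t1 h1] := hanging_ins sT xnT px ((topP _).1 tP) Hc.
have [t1' h1'] := hanging_ins sT' xnT' px ((topP _).1 tP') Hc'.
split; split => //; try exact/topP.
- by move=> z /sP; rewrite mem_ins => ->; rewrite orbT.
- exact: bst_ins bT'.
- by rewrite !hangP h1 h1' -!hangP hP.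
Qed.

Lemma touched_seq_del (P : seq rat) (x m : rat) : uniq P ->
  exists2 P', uniq P' /\ (size P' <= size P)%N &
    forall z, (z \in P') = del_touched (fun z => z \in P) x m z.
Proof.
move=> uP.
exists (if x \in P then if (m != x) && (m \notin P) then m :: rem x P else rem x P else P).
  case: ifP => xP; last by split.
  have P0 : (0 < size P)%N by case: (P) xP.
  case: ifP => [/andP[_ mP]|_]; split.
  - by rewrite /= rem_uniq // andbT; apply: contra mP; apply: mem_rem.
  - by rewrite /= size_rem // prednK.
  - exact: rem_uniq.
  - by rewrite size_rem // leq_pred.
move=> z; rewrite /del_touched; case xP: (x \in P) => //.
case: ifP => [/andP[mx mP] | H].
  rewrite in_cons (mem_rem_uniq _ uP) inE.
  by case: (eqVneq z m) => [->|zm]; rewrite ?mx ?orbT ?orbF.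
rewrite (mem_rem_uniq _ uP) inE.
case: (eqVneq z m) => [->|zm]; rewrite ?orbT ?orbF //.
case: (eqVneq m x) => [->|mx] //.
by move: H; rewrite mx /= => /negbT; rewrite negbK => ->.
Qed.

Lemma step_del K x T T' s P : x \notin K -> x != s -> bst (x :: K) T ->
  step (x :: K) T T' s P ->
  exists2 P', (size P' <= size P)%N & step K (del x T) (del x T') s P'.
Proof.
move=> xK xs bT [[uP sP tP sinP] [bT' tP' hP]].
have eqT := bst_inorder bT bT'; case: bT (bT') => sT eT [sT' _].
have xT : x \in inorder T by rewrite eT mem_head.
set m := pred_key x (inorder T).
have Hc : pred_cand x m (inorder T) := pred_cand_pred_key x sT.
have [P' [uP' leP'] memP'] := touched_seq_del x m uP.
have topP : forall t, topset P' t <-> top_closed (del_touched (fun z => z \in P) x m) t.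
  by move=> t; apply: topsetP.
have hangP : forall t, hang P' t = hanging (del_touched (fun z => z \in P) x m) t.
  by move=> t; apply: hangE.
have [t1 h1] := hanging_del sT xT ((topsetP _ (fun=> erefl)).1 tP) Hc.
have Hc' : pred_cand x m (inorder T') by rewrite eqT.
have xT' : x \in inorder T' by rewrite eqT.
have [t1' h1'] := hanging_del sT' xT' ((topsetP _ (fun=> erefl)).1 tP') Hc'.
exists P' => //; split; split => //; try exact/topP.
- move=> z; rewrite memP' inorder_del // mem_filter /del_touched /=.
  case: ifP => xP /=; last by move=> zP; rewrite (sP _ zP) andbT; apply: contraTneq zP => ->; rewrite xP.
  case/andP => zx /orP[/sP -> | /eqP zm]; rewrite zx //=.
  by rewrite zm; apply: pred_key_in; rewrite -/m -zm.
- by rewrite memP' /del_touched; case: ifP => _; rewrite sinP // andbT eq_sym.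
- exact: bst_del bT'.
- by rewrite !hangP h1 h1' -!(hangE _ (fun=> erefl)) hP.
Qed.

Lemma exec_ins K x T S c : x \notin K -> bst K T -> exec K T S c ->
  exec (x :: K) (ins x T) S c.
Proof.
move=> xK + ex; elim: ex => [T0 | T0 T' s S0 P c0 st _ IH] bT; first exact: exec_nil.
have [_ [bT' _ _]] := st.
exact: exec_cons (step_ins xK bT st) (IH bT').
Qed.

Lemma exec_del K x T S c : x \notin K -> x \notin S -> bst (x :: K) T ->
  exec (x :: K) T S c -> exists2 c', (c' <= c)%N & exec K (del x T) S c'.
Proof.
move=> xK + + ex; elim: ex => [T0 | T0 T' s S0 P c0 st _ IH] xS bT.
  by exists 0%N => //; apply: exec_nil.
move: xS; rewrite in_cons negb_or => /andP[xs xS0].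
have [P' leP st'] := step_del xK xs bT st.
have [_ [bT' _ _]] := st.
have [c1 le1 ex1] := IH xS0 bT'.
by exists (size P' + c1)%N; [apply: leq_add | apply: exec_cons st' ex1].
Qed.

Lemma exec_eq_keys K1 K2 T S c : K1 =i K2 -> exec K1 T S c -> exec K2 T S c.
Proof.
move=> E; elim => [T0 | T0 T' s S0 P c0 [H1 [[sT' eT'] tP' hP]] _ IH]; first exact: exec_nil.
apply: exec_cons IH; split => //; split => //; split => // z; by rewrite eT' E.
Qed.

Lemma achievable_eq_keys K1 K2 S c : K1 =i K2 -> achievable K1 S c -> achievable K2 S c.
Proof.
move=> E [T [[sT eT] ex]]; exists T; split; last exact: exec_eq_keys ex.
by split => // z; rewrite eT E.
Qed.

Lemma achievable_ins K x S c : x \notin K -> achievable K S c -> achievable (x :: K) S c.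
Proof. by move=> xK [T [bT ex]]; exists (ins x T); split; [exact: bst_ins | exact: exec_ins]. Qed.

Lemma achievable_del K x S c : x \notin K -> x \notin S -> achievable (x :: K) S c ->
  exists2 c', (c' <= c)%N & achievable K S c'.
Proof.
move=> xK xS [T [bT ex]]; have [c' le ex'] := exec_del xK xS bT ex.
by exists c' => //; exists (del x T); split => //; apply: bst_del.
Qed.

Lemma achievable_catr K X S c : achievable K S c -> achievable (K ++ X) S c.
Proof.
elim: X => [|x X IH] AK; first by apply: achievable_eq_keys AK => z; rewrite cats0.
have E : K ++ x :: X =i x :: (K ++ X) by move=> z; rewrite !(mem_cat, in_cons) orbCA.
apply: achievable_eq_keys (fun z => esym (E z)) _.
case: (boolP (x \in K ++ X)) => xKX; last exact: achievable_ins xKX (IH AK).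
by apply: achievable_eq_keys (IH AK) => z; rewrite in_cons; case: eqVneq => // ->.
Qed.

Lemma achievable_catr_le K X S c : {subset S <= K} -> achievable (K ++ X) S c ->
  exists2 c', (c' <= c)%N & achievable K S c'.
Proof.
move=> SK; elim: X c => [|x X IH] c AKX.
  by exists c => //; apply: achievable_eq_keys AKX => z; rewrite cats0.
have E : K ++ x :: X =i x :: (K ++ X) by move=> z; rewrite !(mem_cat, in_cons) orbCA.
move/(achievable_eq_keys E): AKX => AKX.
case: (boolP (x \in K ++ X)) => xKX.
  by apply: IH; apply: achievable_eq_keys AKX => z; rewrite in_cons; case: eqVneq => // ->.
have xS : x \notin S by apply: contra xKX => /SK; rewrite mem_cat => ->.
have [c' le /IH [c'' le' AK]] := achievable_del xKX xS AKX.
by exists c'' => //; apply: leq_trans le' le.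
Qed.

Lemma topset_all P t : {subset inorder t <= P} -> topset P t.
Proof.
elim: t => //= l IHl k r IHr H.
rewrite H ?mem_cat ?in_cons ?eqxx ?orbT //; split.
  by apply: IHl => z zl; apply: H; rewrite mem_cat zl.
by apply: IHr => z zr; apply: H; rewrite mem_cat in_cons zr !orbT.
Qed.

Lemma exec_touch_all K T S : {subset S <= K} -> bst K T -> exists c, exec K T S c.
Proof.
move=> + bT; elim: S => [|s S IH] SK; first by exists 0%N; apply: exec_nil.
have [c ec] : exists c, exec K T S c.
  by apply: IH => z zS; apply: SK; rewrite in_cons zS orbT.
have [sT eT] := bT.
exists (size (inorder T) + c)%N; apply: exec_cons ec; split; split => //.
- exact: (sorted_uniq lt_trans ltxx sT).
- exact: topset_all.
- by rewrite eT; apply/SK/mem_head.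
- exact: topset_all.
Qed.

Fixpoint spine (s : seq rat) := if s is k :: s' then Node Leaf k (spine s') else Leaf.

Lemma bst_spine K : bst K (spine (sort <=%O (undup K))).
Proof.
have inorder_spine s : inorder (spine s) = s by elim: s => //= k s ->.
split; rewrite inorder_spine; first by rewrite sort_lt_sorted undup_uniq.
by move=> z; rewrite mem_sort mem_undup.
Qed.

Lemma is_OPT_exists K S : {subset S <= K} -> exists v, is_OPT K S v.
Proof.
move=> SK; have bT := bst_spine K; have [c ec] := exec_touch_all SK bT.
have AKc : achievable K S c by exists (spine (sort <=%O (undup K))).
have [v [[Av minv] _]] := @dec_inh_nat_subset_has_unique_least_element
  (achievable K S) (fun v => classic _) (ex_intro _ c AKc).
by exists v; split => // d /minv /ssrnat.leP.
Qed.

Lemma is_OPT_catr K X S v : {subset S <= K} -> is_OPT K S v -> is_OPT (K ++ X) S v.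
Proof.
move=> SK [Av minv]; split; first exact: achievable_catr.
by move=> c /(achievable_catr_le SK) [c' le /minv]; move/leq_trans; apply.
Qed.

Theorem mainTheorem15 (n : nat) (S : seq nat) (X : seq rat) :
  all (fun s => (1 <= s <= n)%N) S ->
  (forall x, x \in X -> x \notin natset n) ->
  exists v : nat,
    is_OPT (natset n) [seq (s%:R : rat) | s <- S] v /\
    is_OPT (natset n ++ X) [seq (s%:R : rat) | s <- S] v.
Proof.
move=> hS _.
have SK : {subset [seq (s%:R : rat) | s <- S] <= natset n}.
  move=> _ /mapP[s sS ->]; have /andP[s1 sn] := allP hS s sS.
  by apply: map_f; rewrite mem_iota s1 add1n ltnS.
have [v Hv] := is_OPT_exists SK.
by exists v; split; last exact: is_OPT_catr.
Qed.
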